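(* Let $0<c<C<\infty$ be fixed. For $i=1,2$ let $l^i,r^i:[0,T]\times\mathbb{R}\to\mathbb{R}$ satisfy Assumption (A) with these constants $c,C$, let $s^i\in C[0,T]$ and $a^i\in\mathbb{R}$ with $l^i(T,a^i)\le0\le r^i(T,a^i)$, and let $(x^i,k^i)$ be the solution of $\mathbb{BSP}_{l^i}^{r^i}(s^i,a^i)$. Then $$\sup_{t\in[0,T]}|k^1_t-k^2_t|\le \frac{2C}{c}|a^1-a^2|+\frac{4C}{c}\sup_{t\in[0,T]}|s^1_t-s^2_t|+\frac{2}{c}\big(\bar L_T\vee\bar R_T\big),$$ where $\bar L_T=\sup_{(t,x)\in[0,T]\times\mathbb{R}}|l^1(t,x)-l^2(t,x)|$ and $\bar R_T=\sup_{(t,x)\in[0,T]\times\mathbb{R}}|r^1(t,x)-r^2(t,x)|$.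
   Context: $C[0,T]$: real continuous functions on $[0,T]$; $BV[0,T]$: functions in $C[0,T]$ starting from $0$ with bounded variation; $I[0,T]$: nondecreasing functions in $C[0,T]$ starting from $0$. Assumption (A) on $l,r:[0,T]\times\mathbb{R}\to\mathbb{R}$ (with constants $0<c<C$): (i) for each $x$, $l(\cdot,x),r(\cdot,x)\in C[0,T]$; (ii) for each $t$, $l(t,\cdot)$, $r(t,\cdot)$ strictly increasing; (iii) $c|x-y|\le|l(t,x)-l(t,y)|\le C|x-y|$ and $c|x-y|\le|r(t,x)-r(t,y)|\le C|x-y|$ for all $t,x,y$; (iv) $\inf_{t,x}(r(t,x)-l(t,x))>0$. A solution of $\mathbb{BSP}_l^r(s,a)$ (for $s\in C[0,T]$, $a\in\mathbb{R}$, $l(T,a)\le0\le r(T,a)$) is a pair $(x,k)\in C[0,T]\times BV[0,T]$ with $x_t=a+s_T-s_t+k_T-k_t$, $l(t,x_t)\le0\le r(t,x_t)$ for all $t$, and $k=k^r-k^l$, $k^r,k^l\in I[0,T]$, $\int_0^T\mathbf 1_{\{l(s,x_s)<0\}}dk^l_s=0$, $\int_0^T\mathbf 1_{\{r(s,x_s)>0\}}dk^r_s=0$; it exists and is unique under Assumption (A). *)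

From HB Require Import structures.
From mathcomp Require Import all_boot all_order all_algebra.
From mathcomp Require Import all_classical all_reals all_analysis.
Set Implicit Arguments. Unset Strict Implicit. Unset Printing Implicit Defensive.
Import Order.TTheory GRing.Theory Num.Theory.
Import numFieldNormedType.Exports.
Local Open Scope classical_set_scope.
Local Open Scope ring_scope.

Section Defs.
Variable R : realType.

Definition assumptionA (T c C : R) (l r : R -> R -> R) : Prop :=
  [/\ (forall x, {within `[0, T], continuous (fun t => l t x)})
    /\ (forall x, {within `[0, T], continuous (fun t => r t x)}),
      (forall t, t \in `[0, T] -> forall x y, x < y -> l t x < l t y)
    /\ (forall t, t \in `[0, T] -> forall x y, x < y -> r t x < r t y),
      (forall t, t \in `[0, T] -> forall x y,
          c * `|x - y| <= `|l t x - l t y| <= C * `|x - y|)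
    /\ (forall t, t \in `[0, T] -> forall x y,
          c * `|x - y| <= `|r t x - r t y| <= C * `|x - y|) &
      (0 < ereal_inf [set (r t x - l t x)%:E | t in `[0%R, T] & x in [set: R]])%E].

Definition in_I (T : R) (k : R -> R) : Prop :=
  [/\ {within `[0, T], continuous k}, k 0 = 0 &
      forall s t, 0 <= s -> s <= t -> t <= T -> k s <= k t].

Definition extT (T : R) (k : R -> R) : R -> R :=
  fun t => k (Num.max 0 (Num.min t T)).

(** Stieltjes integral over [0,T] of the indicator of A with respect to
    the nondecreasing continuous function k vanishes:
    int_0^T 1_A(s) dk_s = 0, computed with the Lebesgue-Stieltjes
    measure of (the constant extension of) k. *)
Definition stieltjes_ind_zero (T : R) (k : R -> R) (A : set R) : Prop :=
  forall f : cumulative R R, (f : R -> R) = extT T k ->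
    (\int[lebesgue_stieltjes_measure f]_(t in `[0%R, T]) (\1_A t)%:E = 0)%E.

Definition BSP_solution (T : R) (l r : R -> R -> R) (s : R -> R) (a : R)
    (x k : R -> R) : Prop :=
  [/\ {within `[0, T], continuous x},
      forall t, t \in `[0, T] -> x t = a + s T - s t + k T - k t,
      forall t, t \in `[0, T] -> l t (x t) <= 0 <= r t (x t) &
      exists kr kl : R -> R,
        [/\ in_I T kr, in_I T kl,
            forall t, t \in `[0, T] -> k t = kr t - kl t,
            stieltjes_ind_zero T kl [set t | l t (x t) < 0] &
            stieltjes_ind_zero T kr [set t | r t (x t) > 0]]].

End Defs.

From HB Require Import structures.
From mathcomp Require Import all_boot all_order all_algebra.
From mathcomp Require Import all_classical all_reals all_analysis.
From mathcomp Require Import lra ring.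
Import Order.TTheory GRing.Theory Num.Theory.
Import numFieldNormedType.Exports.
Local Open Scope classical_set_scope.
Local Open Scope ring_scope.
Set Implicit Arguments. Unset Strict Implicit.

(* Write k^i = k^{r,i} - k^{l,i} and D t = (k^1 T - k^1 t) - (k^2 T - k^2 t); then
   x^1 t - x^2 t is within p = |a^1 - a^2| + 2 sup |s^1 - s^2| of D t.  Where
   D t > p + d / c, with d = L_T \/ R_T, the gap x^1 - x^2 exceeds d / c, and since the
   barriers grow at rate at least c this forces r^1(t, x^1 t) > 0 and l^2(t, x^2 t) < 0,
   so k^{r,1} and k^{l,2} do not move and D can only increase.  As D T = 0, a first
   exit time argument gives D <= p + d / c on [0, T]; by symmetry also -D <= p + d / c,
   and k^1 t - k^2 t = D 0 - D t.  This yields the constants 2, 4 and 2 / c; the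
   factors C / c >= 1 of the statement are a weakening. *)

Section skorokhod_comparison.
Context {R : realType}.
Implicit Types (T c d u v t x y : R) (f k : R -> R).

Lemma within_continuous_dist_lt (A : set R) f x e :
  {within A, continuous f} -> A x -> 0 < e ->
  exists2 d, 0 < d & forall y, A y -> `|x - y| < d -> `|f x - f y| < e.
Proof.
move=> /subspace_continuousP /(_ x) cf Ax e0.
move: (cf Ax) => /cvgr_dist_lt /(_ e e0); rewrite near_withinE.
by move=> /nbhs_ballP[d /= d0 Hd]; exists d => // y Ay xy; apply: Hd.
Qed.

Lemma clamp_in_itv T t : 0 <= T -> Num.max 0 (Num.min t T) \in `[0, T].
Proof.
move=> T0; rewrite in_itv /= le_max lexx /= ge_max T0.
by rewrite ge_min lexx orbT.
Qed.

Lemma clamp_dist_le T s t :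
  `|Num.max 0 (Num.min s T) - Num.max 0 (Num.min t T)| <= `|s - t|.
Proof.
have [st ts] : s - t <= `|s - t| /\ t - s <= `|s - t|.
  by split; rewrite ?ler_norm // distrC ler_norm.
rewrite ler_norml !minEle !maxEle.
by case: (leP s T); case: (leP t T); case: (leP 0 s); case: (leP 0 t);
   case: (leP 0 T) => *; apply/andP; split; lra.
Qed.

Lemma extT_id T k t : t \in `[0, T] -> extT T k t = k t.
Proof.
rewrite in_itv /= => /andP[t0 tT].
by rewrite /extT (min_idPl tT) (max_idPr t0).
Qed.

Lemma extT_continuous T k : 0 <= T ->
  {within `[0, T], continuous k} -> continuous (extT T k).
Proof.
move=> T0 ck x; apply/cvgrPdist_lt => e e0.
have [d d0 Hd] := within_continuous_dist_lt ck (clamp_in_itv x T0) e0.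
apply/nbhs_ballP; exists d => // t /= xt.
by apply: Hd; [exact: clamp_in_itv | exact: le_lt_trans (clamp_dist_le _ _ _) xt].
Qed.

Lemma extT_nondecreasing T k : 0 <= T -> in_I T k ->
  {homo extT T k : x y / x <= y}.
Proof.
move=> T0 [_ _ kmono] x y xy.
move: (clamp_in_itv x T0) (clamp_in_itv y T0).
rewrite !in_itv /= => /andP[x0 _] /andP[_ yT].
by apply: kmono => //; apply: le_max2 => //; exact: le_min2.
Qed.

Lemma lebesgue_stieltjes_measure_itv_oc (F : cumulative R R) u v : u < v ->
  lebesgue_stieltjes_measure F `]u, v] = (F v - F u)%:E.
Proof.
move=> uv; rewrite /lebesgue_stieltjes_measure /= /measure_extension /=.
rewrite measurable_mu_extE //; last exact: is_ocitv.
by rewrite /= wlength_itv /= lte_fin uv.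
Qed.

(* The extension [extT T k] is cumulative, so [stieltjes_ind_zero] applies to it;
   integrating the indicator of ]u, v] <= A bounds the increment k v - k u by 0. *)
Lemma stieltjes_ind_zero_const T k (A : set R) u v :
  in_I T k -> stieltjes_ind_zero T k A ->
  0 <= u -> u < v -> v <= T -> (forall t, u < t -> t <= v -> A t) -> k v = k u.
Proof.
move=> kI kA u0 uv vT uvA; have T0 : 0 <= T by lra.
have kc : right_continuous (extT T k).
  by apply/right_continuousW/extT_continuous => //; case: kI.
pose F : cumulative R R :=
  HB.pack (extT T k) (isCumulative.Build R _ R _ (extT_nondecreasing T0 kI) kc).
have muv : measurable (`]u, v]%classic : set (measurableTypeR R)).
  by apply: sub_sigma_algebra; exact: is_ocitv.
have : (lebesgue_stieltjes_measure F `]u, v] <= 0)%E.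
  rewrite -(kA F erefl) ge0_integralE; last by move=> ? _; rewrite lee_fin.
  apply: ereal_sup_ubound; exists (indic_nnsfun R muv).
    move=> t /=; rewrite /measurable_realfun.mindic indicE /patch.
    have [tuv|] := boolP (t \in (`]u, v]%classic : set R)); last first.
      by case: ifP => _; rewrite ?indicE ?lee_fin.
    move: (tuv); rewrite in_setE /= in_itv /= => /andP[ut tv].
    rewrite ifT; last by rewrite in_setE /= in_itv /=; apply/andP; split; lra.
    by rewrite indicE mem_set //; exact: uvA.
  by rewrite /= /measurable_realfun.mindic sintegral_indic.
have [u_in v_in] : u \in `[0, T] /\ v \in `[0, T].
  by rewrite !in_itv /=; split; apply/andP; split; lra.
rewrite lebesgue_stieltjes_measure_itv_oc // lee_fin /= !extT_id //.
have [_ _ /(_ u v u0 (ltW uv) vT)] := kI; lra.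
Qed.

(* Start from t with f t > δ and let σ be the first time after t at which f <= δ;
   on ]t, σ] the function stays above δ, so f t <= f σ <= δ. *)
Lemma le_of_nondecreasing_above T f (δ : R) :
  {within `[0, T], continuous f} -> f T <= δ ->
  (forall u v, 0 <= u -> u < v -> v <= T ->
     (forall w, u < w -> w <= v -> δ < f w) -> f u <= f v) ->
  forall t, 0 <= t -> t <= T -> f t <= δ.
Proof.
move=> cf fT fmono t t0 tT; rewrite leNgt; apply/negP => ft.
pose S := [set v | [/\ t <= v, v <= T & f v <= δ]].
have ST : S T by split.
have hS : has_lbound S by exists t => v [].
pose σ := inf S.
have tσ : t <= σ by apply: lb_le_inf; [exists T | move=> v []].
have σT : σ <= T := ge_inf hS ST.
have σ_in : `[0, T]%classic σ by rewrite /= in_itv /=; apply/andP; split; lra.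
have above v : t <= v -> v < σ -> δ < f v.
  move=> tv vσ; rewrite ltNge; apply/negP => fv.
  by have := ge_inf hS (And3 tv (ltW (lt_le_trans vσ σT)) fv); lra.
have fσ : f σ <= δ.
  rewrite leNgt; apply/negP => δfσ.
  have e0 : 0 < f σ - δ by lra.
  have [d d0 Hd] := within_continuous_dist_lt cf σ_in e0.
  have [y [ty yT fy] yσ] := @inf_lt _ S (σ + d) (ex_intro _ T ST) ltac:(lra).
  have σy : σ <= y by apply: (ge_inf hS); split.
  have y_in : `[0, T]%classic y by rewrite /= in_itv /=; apply/andP; split; lra.
  have σyd : `|σ - y| < d by rewrite distrC ger0_norm; lra.
  by have := Hd y y_in σyd; rewrite ltr_norml => /andP[]; lra.
have tσ' : t < σ.
  by rewrite lt_neqAle tσ andbT; apply/eqP => tσE; move: fσ; rewrite -tσE; lra.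
have e0 : 0 < f t - f σ by lra.
have [d d0 Hd] := within_continuous_dist_lt cf σ_in e0.
pose v := Num.max ((t + σ) / 2) (σ - d / 2).
have [tv vσ] : t < v /\ v < σ.
  by rewrite lt_max gt_max; split; [apply/orP; left | apply/andP; split]; lra.
have v_in : `[0, T]%classic v by rewrite /= in_itv /=; apply/andP; split; lra.
have σvd : `|σ - v| < d.
  have : σ - d / 2 <= v by rewrite le_max lexx orbT.
  by rewrite gtr0_norm ?subr_gt0 //; lra.
have ftv : f t <= f v.
  by apply: fmono; [lra | lra | lra | move=> w tw wv; apply: above; lra].
by have := Hd v v_in σvd; rewrite ltr_norml => /andP[]; lra.
Qed.

Definition grows_at_rate T c (l : R -> R -> R) :=
  forall t, t \in `[0, T] -> forall x y, x <= y -> l t x + c * (y - x) <= l t y.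

Lemma grows_at_rate_of_increasing T c (l : R -> R -> R) :
  (forall t, t \in `[0, T] -> forall x y, x < y -> l t x < l t y) ->
  (forall t, t \in `[0, T] -> forall x y, c * `|x - y| <= `|l t x - l t y|) ->
  grows_at_rate T c l.
Proof.
move=> lincr llip t t_in x y; rewrite le_eqVlt => /predU1P[-> | xy].
  by rewrite subrr mulr0 addr0.
have := llip t t_in y x.
by rewrite !gtr0_norm ?subr_gt0 ?lincr //; lra.
Qed.

Lemma assumptionA_grows_at_rate T c C (l r : R -> R -> R) :
  assumptionA T c C l r -> grows_at_rate T c l /\ grows_at_rate T c r.
Proof.
move=> [_ [lincr rincr] [llip rlip] _].
by split; apply: grows_at_rate_of_increasing => // t t_in x y;
  [case/andP: (llip t t_in x y) | case/andP: (rlip t t_in x y)].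
Qed.

Lemma within_continuous_eq_sub (A : set R) k kr kl :
  {within A, continuous kr} -> {within A, continuous kl} ->
  (forall t, A t -> k t = kr t - kl t) -> {within A, continuous k}.
Proof.
move=> ckr ckl kE; apply: (@subspace_eq_continuous _ _ _ (kr \- kl)).
  by move=> t; rewrite inE => /kE /esym.
by move=> t; apply: cvgB; [exact: ckr | exact: ckl].
Qed.

Definition tail_diff T k1 k2 t := (k1 T - k1 t) - (k2 T - k2 t).

Section one_sided_comparison.
Variables (T c d p : R) (l1 r1 l2 r2 : R -> R -> R).
Variables (x1 x2 k1 k2 kr1 kl1 kr2 kl2 : R -> R).
Hypotheses (c0 : 0 < c) (T0 : 0 <= T).
Hypotheses (kr1I : in_I T kr1) (kl1I : in_I T kl1).
Hypotheses (kr2I : in_I T kr2) (kl2I : in_I T kl2).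
Hypotheses (k1E : forall t, t \in `[0, T] -> k1 t = kr1 t - kl1 t)
           (k2E : forall t, t \in `[0, T] -> k2 t = kr2 t - kl2 t).
Hypotheses (kr1_flat : stieltjes_ind_zero T kr1 [set t | r1 t (x1 t) > 0])
           (kl2_flat : stieltjes_ind_zero T kl2 [set t | l2 t (x2 t) < 0]).
Hypotheses (l1x1 : forall t, t \in `[0, T] -> l1 t (x1 t) <= 0)
           (r2x2 : forall t, t \in `[0, T] -> 0 <= r2 t (x2 t)).
Hypotheses (r1_grows : grows_at_rate T c r1) (l2_grows : grows_at_rate T c l2).
Hypotheses (l12 : forall t, t \in `[0, T] -> forall x, `|l1 t x - l2 t x| <= d)
           (r12 : forall t, t \in `[0, T] -> forall x, `|r1 t x - r2 t x| <= d).
Hypothesis x12 :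
  forall t, t \in `[0, T] -> `|x1 t - x2 t - tail_diff T k1 k2 t| <= p.

(* Both barriers r1 and l2 grow at rate c, so the gap x1 - x2 > d / c lifts
   r1 t (x1 t) above r2 t (x2 t) >= 0 and pushes l2 t (x2 t) below l1 t (x1 t) <= 0. *)
Lemma tail_diff_gap_active t : t \in `[0, T] -> p + d / c < tail_diff T k1 k2 t ->
  0 < r1 t (x1 t) /\ l2 t (x2 t) < 0.
Proof.
move=> t_in gap.
have d0 : 0 <= d := le_trans (normr_ge0 _) (l12 t_in 0).
have gap' : d / c < x1 t - x2 t.
  by move: (x12 t_in); rewrite ler_norml => /andP[? _]; lra.
have gapc : d < c * (x1 t - x2 t) by rewrite mulrC -ltr_pdivrMr.
have x21 : x2 t <= x1 t by have := divr_ge0 d0 (ltW c0); lra.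
have := r1_grows t_in x21; have := l2_grows t_in x21.
move: (l12 t_in (x1 t)) (r12 t_in (x2 t)); rewrite !ler_norml => /andP[? ?] /andP[? ?].
by have := l1x1 t_in; have := r2x2 t_in; split; lra.
Qed.

Lemma tail_diff_le t : t \in `[0, T] -> tail_diff T k1 k2 t <= p + d / c.
Proof.
have inT u : 0 <= u -> u <= T -> u \in `[0, T] by rewrite in_itv /= => -> ->.
have TT := inT T T0 (lexx T).
rewrite in_itv /= => /andP[t0 tT]; apply: le_of_nondecreasing_above t0 tT.
- have [[ckr1 _ _] [ckl1 _ _]] := (kr1I, kl1I).
  have [[ckr2 _ _] [ckl2 _ _]] := (kr2I, kl2I).
  have ck1 := within_continuous_eq_sub ckr1 ckl1 k1E.
  have ck2 := within_continuous_eq_sub ckr2 ckl2 k2E.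
  move=> u; apply: cvgB; apply: cvgB; try exact: cvg_cst; [exact: ck1 | exact: ck2].
- have d0 : 0 <= d := le_trans (normr_ge0 _) (l12 TT 0).
  have p0 : 0 <= p := le_trans (normr_ge0 _) (x12 TT).
  by rewrite /tail_diff !subrr; have := divr_ge0 d0 (ltW c0); lra.
move=> u v u0 uv vT above.
have active w : u < w -> w <= v -> 0 < r1 w (x1 w) /\ l2 w (x2 w) < 0.
  by move=> uw wv; apply: tail_diff_gap_active; [apply: inT | apply: above]; lra.
have kr1_uv : kr1 v = kr1 u.
  apply: (stieltjes_ind_zero_const kr1I kr1_flat u0 uv vT) => w uw wv.
  by case: (active w uw wv).
have kl2_uv : kl2 v = kl2 u.
  apply: (stieltjes_ind_zero_const kl2I kl2_flat u0 uv vT) => w uw wv.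
  by case: (active w uw wv).
have [_ _ /(_ u v u0 (ltW uv) vT) kl1_uv] := kl1I.
have [_ _ /(_ u v u0 (ltW uv) vT) kr2_uv] := kr2I.
rewrite /tail_diff !k1E ?k2E ?inT //; lra.
Qed.

End one_sided_comparison.

Lemma bsp_dist_k_le T c (l1 r1 l2 r2 : R -> R -> R) (s1 s2 : R -> R) (a1 a2 : R)
    (x1 k1 x2 k2 : R -> R) (ds d : R) :
  0 < c -> 0 <= T ->
  grows_at_rate T c l1 -> grows_at_rate T c r1 ->
  grows_at_rate T c l2 -> grows_at_rate T c r2 ->
  BSP_solution T l1 r1 s1 a1 x1 k1 -> BSP_solution T l2 r2 s2 a2 x2 k2 ->
  (forall t, t \in `[0, T] -> `|s1 t - s2 t| <= ds) ->
  (forall t, t \in `[0, T] -> forall x, `|l1 t x - l2 t x| <= d) ->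
  (forall t, t \in `[0, T] -> forall x, `|r1 t x - r2 t x| <= d) ->
  forall t, t \in `[0, T] -> `|k1 t - k2 t| <= 2 * `|a1 - a2| + 4 * ds + 2 * (d / c).
Proof.
move=> c0 T0 gl1 gr1 gl2 gr2.
move=> [_ x1E x1_in [kr1 [kl1 [kr1I kl1I k1E kl1_flat kr1_flat]]]].
move=> [_ x2E x2_in [kr2 [kl2 [kr2I kl2I k2E kl2_flat kr2_flat]]]].
move=> s12 l12 r12 t t_in.
have [T_in O_in] : T \in `[0, T] /\ 0 \in `[0, T] by split; rewrite in_itv /= lexx T0.
pose p := `|a1 - a2| + 2 * ds.
have x12 u : u \in `[0, T] -> `|x1 u - x2 u - tail_diff T k1 k2 u| <= p.
  move=> u_in; rewrite x1E ?x2E // /tail_diff.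
  have -> : a1 + s1 T - s1 u + k1 T - k1 u - (a2 + s2 T - s2 u + k2 T - k2 u)
      - (k1 T - k1 u - (k2 T - k2 u)) = a1 - a2 + (s1 T - s2 T) - (s1 u - s2 u).
    by ring.
  have := ler_normB (a1 - a2 + (s1 T - s2 T)) (s1 u - s2 u).
  have := ler_normD (a1 - a2) (s1 T - s2 T).
  by have := s12 T T_in; have := s12 u u_in; rewrite /p; lra.
have x21 u : u \in `[0, T] -> `|x2 u - x1 u - tail_diff T k2 k1 u| <= p.
  move=> /x12; congr (_ <= _); rewrite -normrN; congr `|_|.
  by rewrite /tail_diff; ring.
have [l1x1 r1x1] : (forall u, u \in `[0, T] -> l1 u (x1 u) <= 0) /\
    (forall u, u \in `[0, T] -> 0 <= r1 u (x1 u)).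
  by split=> u /x1_in /andP[].
have [l2x2 r2x2] : (forall u, u \in `[0, T] -> l2 u (x2 u) <= 0) /\
    (forall u, u \in `[0, T] -> 0 <= r2 u (x2 u)).
  by split=> u /x2_in /andP[].
have l21 u : u \in `[0, T] -> forall x, `|l2 u x - l1 u x| <= d.
  by move=> u_in x; rewrite distrC; exact: l12.
have r21 u : u \in `[0, T] -> forall x, `|r2 u x - r1 u x| <= d.
  by move=> u_in x; rewrite distrC; exact: r12.
have D12 := tail_diff_le c0 T0 kr1I kl1I kr2I kl2I k1E k2E kr1_flat kl2_flat
  l1x1 r2x2 gr1 gl2 l12 r12 x12.
have D21 := tail_diff_le c0 T0 kr2I kl2I kr1I kl1I k2E k1E kr2_flat kl1_flat
  l2x2 r1x1 gr2 gl1 l21 r21 x21.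
have [[_ kr10 _] [_ kl10 _]] := (kr1I, kl1I).
have [[_ kr20 _] [_ kl20 _]] := (kr2I, kl2I).
have := D12 _ O_in; have := D12 _ t_in; have := D21 _ O_in; have := D21 _ t_in.
rewrite /tail_diff (k1E 0 O_in) (k2E 0 O_in) kr10 kl10 kr20 kl20 /p ler_norml.
by move=> *; apply/andP; split; lra.
Qed.

Lemma lee_affine_fin (x a b e : R) (S L : \bar R) :
  0 < b -> 0 < e -> (0 <= S)%E -> (0 <= L)%E ->
  (forall s l, S = s%:E -> L = l%:E -> x <= a + b * s + e * l) ->
  (x%:E <= a%:E + b%:E * S + e%:E * L)%E.
Proof.
move=> b0 e0; case: S => [s | | //] S0; last first.
  move=> L0 _; rewrite gt0_muley // addey // addye ?leey //.
  by rewrite gt_eqF // (lt_le_trans ltNy0) // mule_ge0 // lee_fin ltW.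
case: L => [l | | //] L0; last first.
  by move=> _; rewrite gt0_muley // -EFinM -EFinD addey // leey.
by move=> /(_ s l erefl erefl); rewrite -!EFinM -!EFinD lee_fin.
Qed.

End skorokhod_comparison.

Unset Implicit Arguments.

Theorem mainTheorem2 (R : realType) (T c C : R) (hT : 0 < T)
  (hc : 0 < c) (hcC : c < C)
  (l1 r1 l2 r2 : R -> R -> R) (s1 s2 : R -> R) (a1 a2 : R)
  (x1 k1 x2 k2 : R -> R) :
  assumptionA T c C l1 r1 -> assumptionA T c C l2 r2 ->
  {within `[0, T], continuous s1} -> {within `[0, T], continuous s2} ->
  l1 T a1 <= 0 <= r1 T a1 -> l2 T a2 <= 0 <= r2 T a2 ->
  BSP_solution T l1 r1 s1 a1 x1 k1 -> BSP_solution T l2 r2 s2 a2 x2 k2 ->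
  (ereal_sup [set (`|k1 t - k2 t|)%:E | t in `[0%R, T]]
   <= (2 * C / c * `|a1 - a2|)%:E
      + (4 * C / c)%:E * ereal_sup [set (`|s1 t - s2 t|)%:E | t in `[0%R, T]]
      + (2 / c)%:E *
        Order.max (ereal_sup [set (`|l1 t x - l2 t x|)%:E | t in `[0%R, T] & x in [set: R]])
                  (ereal_sup [set (`|r1 t x - r2 t x|)%:E | t in `[0%R, T] & x in [set: R]]))%E.
Proof.
move=> A1 A2 _ _ _ _ sol1 sol2.
have [gl1 gr1] := assumptionA_grows_at_rate A1.
have [gl2 gr2] := assumptionA_grows_at_rate A2.
set S := ereal_sup [set (`|s1 t - s2 t|)%:E | t in _].
set SL := ereal_sup [set (`|l1 t x - l2 t x|)%:E | t in _ & x in _].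
set SR := ereal_sup [set (`|r1 t x - r2 t x|)%:E | t in _ & x in _].
have T_in : T \in `[0, T] by rewrite in_itv /= (ltW hT) lexx.
have leS t : t \in `[0, T] -> ((`|s1 t - s2 t|)%:E <= S)%E.
  by move=> t_in; apply: ereal_sup_ubound; exists t.
have leL t : t \in `[0, T] -> forall x, ((`|l1 t x - l2 t x|)%:E <= maxe SL SR)%E.
  move=> t_in x; rewrite le_max; apply/orP; left.
  by apply: ereal_sup_ubound; exists t => //; exists x.
have leR t : t \in `[0, T] -> forall x, ((`|r1 t x - r2 t x|)%:E <= maxe SL SR)%E.
  move=> t_in x; rewrite le_max; apply/orP; right.
  by apply: ereal_sup_ubound; exists t => //; exists x.
apply: ge_ereal_sup => _ [t t_in <-]; apply: lee_affine_fin.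
- by rewrite !mulr_gt0 ?invr_gt0 //; lra.
- by rewrite mulr_gt0 ?invr_gt0.
- exact: le_trans (leS T T_in).
- exact: le_trans (leL T T_in 0).
move=> ds d dsE dE; move: leS leL leR; rewrite dsE dE => leS leL leR.
have := bsp_dist_k_le (ds := ds) (d := d) hc (ltW hT) gl1 gr1 gl2 gr2 sol1 sol2
  leS leL leR t_in.
have ds0 : 0 <= ds := le_trans (normr_ge0 _) (leS T T_in).
have Cc : 1 <= C / c by rewrite ler_pdivlMr // mul1r ltW.
have := ler_wpM2r (normr_ge0 (a1 - a2)) Cc; have := ler_wpM2r ds0 Cc.
have -> : 2 * C / c * `|a1 - a2| = 2 * (C / c * `|a1 - a2|) by rewrite !mulrA.
have -> : 4 * C / c * ds = 4 * (C / c * ds) by rewrite !mulrA.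
have -> : 2 / c * d = 2 * (d / c) by rewrite mulrAC -mulrA.
by rewrite !mul1r; lra.
Qed.
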